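(* Let $T\subseteq\mathbb{R}^n$ be an action set. Then $\dim T+\dim\mathbf{W}(T)=n$, where $\mathbf{W}(T)=\bigcap_{t\in T}\mathbf{W}(t)$.
   Context: Single-commodity network pricing setting: $G=(\mathcal{V},\mathcal{A})$ directed graph, arc costs $c\ge0$, nonempty tolled arc set $\mathcal{A}_1\subsetneq\mathcal{A}$, $n=|\mathcal{A}_1|$, $N$ node–arc incidence matrix, single origin $o$ and destination $d$ connected by a toll-free path, $b_o=1$, $b_d=-1$, $b_i=0$ otherwise, $\mathcal{X}=\{x\in\mathbb{R}^{\mathcal{A}}: Nx=b,\ x\ge0\}$, $x_{\mathcal{A}_1}$ the restriction of $x$ to $\mathcal{A}_1$. Let $f(t)=\min\{c^\top x+t^\top x_{\mathcal{A}_1}: x\in\mathcal{X}\}$ for $t\in\mathbb{R}^n$, $t\ge0$, and $f(t)=-\infty$ otherwise. An action set is a set $T=\{t:(t,z)\in F\text{ for some }z\}$ where $F$ is a face of $\operatorname{epi}(-f)$ whose affine hull's direction space does not contain $(0,1)$. For $t\ge0$, $\mathbf{W}(t)$ is the set of $w$ such that $(w,x)$ is optimal for some $x$ in $\min_{w,x}\{c^\top x+t^\top w: x_{\mathcal{A}_1}\le w,\ Nx=b,\ w\ge0,\ x\ge0\}$. $\dim$ denotes the dimension of the affine hull. *)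

From HB Require Import structures.
From mathcomp Require Import all_boot all_order all_algebra.
From mathcomp Require Import boolp reals.
Set Implicit Arguments. Unset Strict Implicit. Unset Printing Implicit Defensive.
Import Order.TTheory GRing.Theory Num.Theory.
Local Open Scope ring_scope.

Section Network.
Variable R : realType.

(** Affine dimension of a set S of vectors in R^I (I a finite index type):
    -1 if S is empty, otherwise the dimension of the direction space of its
    affine hull, i.e. the maximal rank of a matrix whose rows are
    differences p_i - q_i of points of S (coordinates listed along enum I). *)
Definition affdim (I : finType) (S : (I -> R) -> Prop) : int :=
  if `[< exists x, S x >] then
    (\max_(k < #|I|.+1 |
        `[< exists m (p q : 'I_m -> I -> R),
              (forall i, S (p i) /\ S (q i)) /\
              \rank (\matrix_(i < m, j < #|I|)
                        (p i (enum_val j) - q i (enum_val j))) = k >]) k)%:Z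
  else -1.

Variables (V arc : finType) (tail head : arc -> V).
Variables (c : arc -> R) (A1 : {set arc}) (o d : V).

(** tolled arcs, the index set of R^n, n = |A1| *)
Definition tolled := {a : arc | a \in A1}.

Definition Nx (x : arc -> R) (v : V) : R :=
  \sum_(a | tail a == v) x a - \sum_(a | head a == v) x a.
Definition bvec (v : V) : R := (v == o)%:R - (v == d)%:R.

Definition Xset (x : arc -> R) : Prop :=
  (forall v, Nx x v = bvec v) /\ (forall a, 0 <= x a).

Definition restr (x : arc -> R) : tolled -> R := fun a => x (val a).

Definition cost (x : arc -> R) : R := \sum_a c a * x a.
Definition tdot (t w : tolled -> R) : R := \sum_a t a * w a.

Definition nonneg (t : tolled -> R) : Prop := forall a, 0 <= t a.

(** f(t) = min { c^T x + t^T x_{A1} : x in X } for t >= 0: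
    [fval t v] says that this minimum exists and equals v. *)
Definition fval (t : tolled -> R) (v : R) : Prop :=
  exists2 x, Xset x & v = cost x + tdot t (restr x) /\
     forall y, Xset y -> v <= cost y + tdot t (restr y).

(** epigraph of -f (f = -oo outside t >= 0, so -f = +oo there) *)
Definition epi_negf (p : (tolled -> R) * R) : Prop :=
  nonneg p.1 /\ exists v, fval p.1 v /\ - v <= p.2.

Definition pcomb (l : R) (p q : (tolled -> R) * R) : (tolled -> R) * R :=
  (fun a => l * p.1 a + (1 - l) * q.1 a, l * p.2 + (1 - l) * q.2).

Definition convex_set (C : (tolled -> R) * R -> Prop) : Prop :=
  forall p q l, C p -> C q -> 0 <= l <= 1 -> C (pcomb l p q).

Definition is_face (C F : (tolled -> R) * R -> Prop) : Prop :=
  (forall p, F p -> C p) /\ convex_set F /\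
  forall p q l, C p -> C q -> 0 < l < 1 -> F (pcomb l p q) -> F p /\ F q.

(** (0,1) belongs to the direction space (the span of the differences
    of points) of the affine hull of F *)
Definition dir_contains_e (F : (tolled -> R) * R -> Prop) : Prop :=
  exists m (lam : 'I_m -> R) (p q : 'I_m -> (tolled -> R) * R),
    (forall i, F (p i) /\ F (q i)) /\
    (forall a, \sum_i lam i * ((p i).1 a - (q i).1 a) = 0) /\
    \sum_i lam i * ((p i).2 - (q i).2) = 1.

Definition action_set (T : (tolled -> R) -> Prop) : Prop :=
  exists F, is_face epi_negf F /\ (exists p, F p) /\ ~ dir_contains_e F /\
    forall t, T t <-> exists z, F (t, z).

Definition feasW (w : tolled -> R) (x : arc -> R) : Prop :=
  Xset x /\ nonneg w /\ forall a, x (val a) <= w a.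

Definition Wt (t : tolled -> R) (w : tolled -> R) : Prop :=
  exists x, feasW w x /\
    forall w' x', feasW w' x' -> cost x + tdot t w <= cost x' + tdot t w'.

Definition WT (T : (tolled -> R) -> Prop) (w : tolled -> R) : Prop :=
  forall t, T t -> Wt t w.

Fixpoint tollfree_walk (u v : V) (s : seq arc) : bool :=
  if s is a :: s' then [&& tail a == u, a \notin A1 & tollfree_walk (head a) v s']
  else u == v.

End Network.

From HB Require Import structures.
From mathcomp Require Import all_boot all_order all_algebra.
From mathcomp Require Import boolp reals.
From mathcomp Require Import ring lra.
Import Order.TTheory GRing.Theory Num.Theory.
Local Open Scope ring_scope.
Set Implicit Arguments. Unset Strict Implicit. Unset Printing Implicit Defensive.

(* The projection [T] of a nonvertical face [F] of epi(-f) is convex and [F]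
   lies on the graph of -f, so f is affine on [T]; hence a flow [x0] optimal at a
   relative interior point [t0] of [T] stays optimal on all of [T], and
   [restr x0] lies in W(T).  For t, t' in T and w, w' in W(T) optimality gives
   (t - t').(w - w') = 0, so dim T + dim W(T) <= n.  Conversely let [u] be
   orthogonal to the directions of W(T).  A Hoffman-type bound, obtained by
   homogenising X into a polyhedral cone and peeling cone points along their
   supports, shows that (t0 +- dl u, -(f t0 +- dl u.x0)) lie in epi(-f) for
   small dl > 0; their midpoint is in [F], so t0 +- dl u are in [T] and [u] is a
   direction of [T]. *)

Section PolyhedralCone.
Variables (R : realType) (I : finType).
Variable L : (I -> R) -> Prop.
Hypothesis L_sub : forall y z th, L y -> L z -> L (fun i => y i - th * z i).
Variables G H : (I -> R) -> R.
Hypothesis G_sub : forall y z th, G (fun i => y i - th * z i) = G y - th * G z.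
Hypothesis H_sub : forall y z th, H (fun i => y i - th * z i) = H y - th * H z.

Definition in_cone y := L y /\ forall i, 0 <= y i.

Hypothesis G_ge0 : forall y, in_cone y -> 0 <= G y.
Hypothesis G_eq0_H_eq0 : forall y, in_cone y -> G y = 0 -> H y = 0.

Definition supp (y : I -> R) : {set I} := [set i | y i != 0].

Lemma in_supp y i : (i \in supp y) = (y i != 0).
Proof. by rewrite inE. Qed.

Lemma H_supp0 y : supp y = set0 -> H y = 0.
Proof.
move=> y0; have -> : y = (fun i => y i - 1 * y i).
  apply: funext => i; have : i \notin supp y by rewrite y0 inE.
  by rewrite in_supp negbK => /eqP ->; rewrite mulr0 subr0.
by rewrite H_sub mul1r subrr.
Qed.

Lemma cone_threshold e K : in_cone e -> `|H e| / `|G e| <= K -> 0 <= H e + K * G e.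
Proof.
move=> ce; have := G_ge0 ce; rewrite le_eqVlt => /orP[/eqP G0|Gp].
  by rewrite -G0 (G_eq0_H_eq0 ce (esym G0)) mulr0 addr0.
rewrite (gtr0_norm Gp) ler_pdivrMr // => hK.
by have := ler_norm (- H e); rewrite normrN; lra.
Qed.

(* Subtracting the largest multiple of [e] that keeps [y] in the cone kills a
   coordinate of the common support. *)
Lemma cone_peel y e : in_cone y -> in_cone e -> supp e = supp y -> supp y != set0 ->
  exists2 th, 0 <= th &
    in_cone (fun i => y i - th * e i) /\ (#|supp (fun i => (y i - th * e i)%R)| < #|supp y|)%N.
Proof.
move=> cy ce se /set0Pn [i0 i0S].
have pos z i : in_cone z -> z i != 0 -> 0 < z i.
  by move=> cz nz; rewrite lt_def nz cz.2.
have yout i : i \notin supp y -> y i = 0 by rewrite in_supp negbK => /eqP.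
have eout i : i \notin supp y -> e i = 0 by rewrite -se in_supp negbK => /eqP.
have ey i : i \in supp y -> 0 < e i by rewrite -se in_supp; apply: pos.
case: (arg_minP (fun i => y i / e i) i0S) => j jS jmin.
have yj : 0 < y j by apply: pos => //; rewrite -in_supp.
exists (y j / e j); first by rewrite divr_ge0 // ltW // ey.
split.
  split; first by apply: L_sub; [exact: cy.1 | exact: ce.1].
  move=> i; rewrite subr_ge0; case: (boolP (i \in supp y)) => iS.
    by rewrite -ler_pdivlMr ?ey //; apply: jmin.
  by rewrite (eout i iS) (yout i iS) mulr0.
apply: (leq_trans _ (proper_card (_ : _ \proper supp y))) => //.
apply/properP; split; last first.
  by exists j => //; rewrite in_supp divfK ?subrr ?eqxx // gt_eqF // ey.
apply/subsetP => i; rewrite !in_supp; apply: contraNN => /eqP yi0.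
have iS : i \notin supp y by rewrite in_supp yi0 eqxx.
by rewrite yi0 (eout i iS) mulr0 subrr.
Qed.

Lemma cone_bound : exists2 K, 0 <= K & forall y, in_cone y -> 0 <= H y + K * G y.
Proof.
have /choice [E HE] : forall S : {set I}, exists e : I -> R,
    (exists y, in_cone y /\ supp y = S) -> in_cone e /\ supp e = S.
  move=> S; case: (pselect (exists y, in_cone y /\ supp y = S)) => [[y hy]|nS].
    by exists y.
  by exists (fun _ => 0) => hS; case: nS.
pose K := \sum_(S : {set I}) `|H (E S)| / `|G (E S)|.
have K_ge S : `|H (E S)| / `|G (E S)| <= K.
  rewrite /K (bigD1 S) //= lerDl; apply: sumr_ge0 => *; exact: divr_ge0.
have K_ge0 : 0 <= K by apply: sumr_ge0 => *; exact: divr_ge0.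
exists K => // y.
elim: {y}_.+1 {-2}y (ltnSn #|supp y|) => // n IH y.
rewrite ltnS => ley cy.
case: (eqVneq (supp y) set0) => [y0|yn0].
  by rewrite (H_supp0 y0) add0r mulr_ge0 // G_ge0.
have [ce se] := HE (supp y) (ex_intro _ y (conj cy erefl)).
have [th th0 [cy' lt']] := cone_peel cy ce se yn0.
have := IH _ (leq_trans lt' ley) cy'; rewrite G_sub H_sub.
have := mulr_ge0 th0 (cone_threshold ce (K_ge (supp y))).
lra.
Qed.

End PolyhedralCone.

Lemma rank_orth_complement (F : fieldType) m1 m2 n
    (A : 'M[F]_(m1, n)) (B : 'M[F]_(m2, n)) :
  A *m B^T = 0 -> (kermx B^T <= A)%MS -> (\rank A + \rank B)%N = n.
Proof.
move=> /mulmx0_rank_max; rewrite mxrank_tr => le_n /mxrankS.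
by rewrite mxrank_ker mxrank_tr leq_subLR addnC => ge_n; apply/eqP; rewrite eqn_leq le_n.
Qed.

Section AffineDimension.
Variables (R : realType) (I : finType).

Definition rowv (v : I -> R) : 'rV[R]_#|I| := \row_j v (enum_val j).

Definition diffmx m (p q : 'I_m -> I -> R) : 'M[R]_(m, #|I|) :=
  \matrix_(i, j) (p i (enum_val j) - q i (enum_val j)).

Definition pairs_in (S : (I -> R) -> Prop) m (p q : 'I_m -> I -> R) :=
  forall i, S (p i) /\ S (q i).

Definition maxrank_pairs (S : (I -> R) -> Prop) m (p q : 'I_m -> I -> R) :=
  pairs_in S p q /\ forall m' (p' q' : 'I_m' -> I -> R),
    pairs_in S p' q' -> (\rank (diffmx p' q') <= \rank (diffmx p q))%N.

Lemma affdim_maxrank (S : (I -> R) -> Prop) s0 : S s0 ->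
  exists m (p q : 'I_m -> I -> R),
    maxrank_pairs S p q /\ affdim S = (\rank (diffmx p q))%:Z.
Proof.
move=> Ss0; rewrite /affdim asboolT; last by exists s0.
have zero_pair : (fun k : 'I_#|I|.+1 => `[< exists m (p q : 'I_m -> I -> R),
    pairs_in S p q /\ \rank (diffmx p q) = k >]) ord0.
  apply/asboolP; exists 0%N, (fun _ _ => 0), (fun _ _ => 0).
  by split => [[]|]; rewrite // flatmx0 mxrank0.
rewrite (bigop.bigmax_eq_arg _ zero_pair).
case: arg_maxnP => [//|k /asboolP [m [p [q [Spq rk]]]] kmax].
exists m, p, q; split; last by rewrite rk.
split=> // m' p' q' Spq'; have := kmax (inord (\rank (diffmx p' q'))).
rewrite inordK ?ltnS ?rank_leq_col // -rk; apply.
by apply/asboolP; exists m', p', q'.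
Qed.

Lemma maxrank_pairs_sub (S : (I -> R) -> Prop) m (p q : 'I_m -> I -> R) s1 s2 :
  maxrank_pairs S p q -> S s1 -> S s2 ->
  (rowv (fun a => s1 a - s2 a) <= diffmx p q)%MS.
Proof.
move=> [Spq pmax] S1 S2; apply: contraT => nsub.
pose p' (i : 'I_(m + 1)) := if split i is inl k then p k else s1.
pose q' (i : 'I_(m + 1)) := if split i is inl k then q k else s2.
have Spq' : pairs_in S p' q'.
  by move=> i; rewrite /p' /q'; case: (split i) => k //; apply: Spq.
have E : diffmx p' q' = col_mx (diffmx p q) (rowv (fun a => s1 a - s2 a)).
  apply/matrixP => i j; rewrite !mxE /p' /q'.
  by case: (split i) => k; rewrite !mxE.
have : (\rank (diffmx p q) < \rank (diffmx p' q'))%N.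
  rewrite E -addsmxE; apply: rank_ltmx.
  by rewrite ltmxE addsmxSl /= addsmx_sub submx_refl.
by rewrite ltnNge pmax.
Qed.

Lemma sub_diffmx_coord m (p q : 'I_m -> I -> R) (v : I -> R) :
  (rowv v <= diffmx p q)%MS ->
  exists D : 'I_m -> R, forall a, v a = \sum_i D i * (p i a - q i a).
Proof.
move=> /submxP [D e]; exists (fun i => D 0 i) => a.
have := congr1 (fun M : 'rV_#|I| => M 0 (enum_rank a)) e.
by rewrite /= !mxE enum_rankK => ->; apply: eq_bigr => i _; rewrite !mxE enum_rankK.
Qed.

Definition rowfun (x : 'rV[R]_#|I|) : I -> R := fun a => x 0 (enum_rank a).

Lemma rowfunK x : rowv (rowfun x) = x.
Proof. by apply/rowP => j; rewrite !mxE /rowfun enum_valK. Qed.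

Lemma sum_enum_val (F : I -> R) : \sum_(j < #|I|) F (enum_val j) = \sum_a F a.
Proof. by rewrite -big_enum_val. Qed.

Lemma rowv_mul_tr (v w : I -> R) : (rowv v *m (rowv w)^T) 0 0 = \sum_a v a * w a.
Proof. by rewrite mxE -sum_enum_val; apply: eq_bigr => j _; rewrite !mxE. Qed.

Lemma diffmx_mul_tr m m' (p q : 'I_m -> I -> R) (p' q' : 'I_m' -> I -> R) i k :
  (diffmx p q *m (diffmx p' q')^T) i k = \sum_a (p i a - q i a) * (p' k a - q' k a).
Proof.
rewrite mxE -(sum_enum_val (fun a => (p i a - q i a) * (p' k a - q' k a))).
by apply: eq_bigr => j _; rewrite !mxE.
Qed.

Lemma kermx_diffmx_orth m (p q : 'I_m -> I -> R) (x : 'rV[R]_#|I|) (v : I -> R) :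
  (x <= kermx (diffmx p q)^T)%MS -> (rowv v <= diffmx p q)%MS ->
  \sum_a rowfun x a * v a = 0.
Proof.
move=> /sub_kermxP xK /submxP [D vD].
by rewrite -rowv_mul_tr rowfunK vD trmx_mul mulmxA xK mul0mx mxE.
Qed.

End AffineDimension.

Section Convex.
Variables (R : realType) (I : finType) (S : (I -> R) -> Prop).
Hypothesis S_convex : forall t1 t2 l, S t1 -> S t2 -> 0 <= l <= 1 ->
  S (fun a => l * t1 a + (1 - l) * t2 a).

Lemma convex_big (J : eqType) (r : seq J) (lam : J -> R) (p : J -> I -> R) :
  (forall j, 0 <= lam j) -> (forall j, S (p j)) -> \sum_(j <- r) lam j = 1 ->
  S (fun a => \sum_(j <- r) lam j * p j a).
Proof.
move=> + Sp; elim: r lam => [|j r IH] lam lam0.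
  by rewrite big_nil => /eqP; rewrite eq_sym oner_eq0.
rewrite big_cons => lam1.
set L := \sum_(k <- r) lam k in lam1.
have L_ge0 : 0 <= L by apply: sumr_ge0.
case: (eqVneq L 0) => [L0|Lnz].
  have lamr0 k : k \in r -> lam k = 0.
    by move/eqP: L0; rewrite psumr_eq0 // => /allP/(_ k) h /h /eqP.
  have -> : (fun a => \sum_(k <- j :: r) lam k * p k a) = p j.
    apply: funext => a; rewrite big_cons big_seq big1 => [|k /lamr0 ->]; last by rewrite mul0r.
    by rewrite addr0 (_ : lam j = 1) ?mul1r //; lra.
  exact: Sp.
have Lp : 0 < L by rewrite lt_def Lnz.
have Sr : S (fun a => \sum_(k <- r) lam k / L * p k a).
  apply: IH => [k|]; first by rewrite divr_ge0.
  by rewrite -mulr_suml divff.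
have := S_convex (Sp j) Sr (l := lam j); rewrite (_ : 1 - lam j = L); last by lra.
have -> : 0 <= lam j <= 1 by apply/andP; split => //; lra.
move=> /(_ isT); congr S; apply: funext => a; rewrite big_cons mulr_sumr.
by congr (_ + _); apply: eq_bigr => k _; rewrite mulrA mulrCA divff // mulr1.
Qed.

(* The barycentre of a point [s0] and of a maximal-rank family of pairs of
   points of [S] can be moved a little in every direction of the affine hull. *)
Lemma exists_relint s0 : S s0 -> exists2 t0, S t0 & forall t, S t ->
  exists s l, S s /\ 0 < l < 1 /\ forall a, t0 a = l * t a + (1 - l) * s a.
Proof.
move=> Ss0; have [m [p [q [mp _]]]] := affdim_maxrank Ss0.
pose k : R := (m.*2.+1)%:R^-1.
have k_gt0 : 0 < k by rewrite invr_gt0 ltr0n.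
pose t0 a := k * (s0 a + \sum_i (p i a + q i a)).
have perturb (al : 'I_m -> R) : (forall i, `|al i| <= k) ->
    S (fun a => t0 a - \sum_i al i * (p i a - q i a)).
  move=> al_le.
  pose lam j := if j is Some (inl i) then k - al i
                else if j is Some (inr i) then k + al i else k.
  pose pt j := if j is Some (inl i) then p i else if j is Some (inr i) then q i else s0.
  have sumE (F : option ('I_m + 'I_m) -> R) :
      \sum_(j <- None :: [seq Some j | j <- index_enum _]) F j =
      F None + (\sum_i F (Some (inl i)) + \sum_i F (Some (inr i))).
    by rewrite big_cons big_map big_sumType.
  have -> : (fun a => t0 a - \sum_i al i * (p i a - q i a)) =
      (fun a => \sum_(j <- None :: [seq Some j | j <- index_enum _]) lam j * pt j a).
    apply: funext => a; rewrite sumE /t0 mulrDr mulr_sumr -addrA; congr (_ + _).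
    rewrite -!big_split /= -sumrN -big_split /=; apply: eq_bigr => i _; ring.
  apply: convex_big => [[[i|i]|]|[[i|i]|]|] /=.
  - by have := ler_norm (al i); have := al_le i; lra.
  - by have := ler_norm (- al i); have := al_le i; rewrite normrN; lra.
  - exact: ltW.
  - exact: (mp.1 i).1.
  - exact: (mp.1 i).2.
  - exact: Ss0.
  rewrite sumE -big_split /= (eq_bigr (fun _ => k *+ 2)) => [|i _]; last by rewrite mulr2n; ring.
  rewrite sumr_const card_ord -mulrnA addrC -mulrSr -mulr_natr mul2n.
  by rewrite mulVf // gt_eqF // ltr0n.
have St0 : S t0.
  have := perturb (fun _ => 0); rewrite normr0 => /(_ (fun _ => ltW k_gt0)).
  by congr S; apply: funext => a; rewrite big1 ?subr0 // => i _; rewrite mul0r.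
exists t0 => // t St.
have [D hD] := sub_diffmx_coord (maxrank_pairs_sub mp St St0).
pose M := 1 + \sum_i `|D i|.
have M_gt0 : 0 < M by rewrite ltr_pwDl // sumr_ge0.
pose dl := k / M.
have dl_gt0 : 0 < dl by rewrite divr_gt0.
have al_le i : `|dl * D i| <= k.
  rewrite normrM (ger0_norm (ltW dl_gt0)) mulrAC ler_pdivrMr // ler_pM2l //.
  rewrite /M (bigD1 i) //=; have : 0 <= \sum_(j < m | j != i) `|D j| by apply: sumr_ge0.
  lra.
exists (fun a => t0 a - \sum_i (dl * D i) * (p i a - q i a)), (dl / (1 + dl)).
split; first exact: perturb.
split.
  by rewrite divr_gt0 ?addr_gt0 //= ltr_pdivrMr ?addr_gt0 // mul1r ltrDr.
move=> a; have -> : \sum_i dl * D i * (p i a - q i a) = dl * (t a - t0 a).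
  by rewrite hD mulr_sumr; apply: eq_bigr => i _; rewrite mulrA.
by field; rewrite gt_eqF // addr_gt0.
Qed.

End Convex.

Section Network.
Variable R : realType.
Variables (V arc : finType) (tail head : arc -> V).
Variables (c : arc -> R) (A1 : {set arc}) (o d : V).

Local Notation tol := (tolled A1).
Local Notation X := (Xset tail head o d).
Local Notation fv := (@fval R V arc tail head c A1 o d).
Local Notation epi := (@epi_negf R V arc tail head c A1 o d).
Local Notation feas := (@feasW R V arc tail head A1 o d).
Local Notation Wt_ := (@Wt R V arc tail head c A1 o d).
Local Notation WT_ := (@WT R V arc tail head c A1 o d).

Lemma tdotDl (t s w : tol -> R) al be :
  tdot (fun a => al * t a + be * s a) w = al * tdot t w + be * tdot s w.
Proof. by rewrite /tdot !mulr_sumr -big_split; apply: eq_bigr => a _ /=; ring. Qed.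

Lemma tdotDr (t w v : tol -> R) al be :
  tdot t (fun a => al * w a + be * v a) = al * tdot t w + be * tdot t v.
Proof. by rewrite /tdot !mulr_sumr -big_split; apply: eq_bigr => a _ /=; ring. Qed.

Lemma tdotNl (t w : tol -> R) : tdot (fun a => - t a) w = - tdot t w.
Proof. by rewrite /tdot -sumrN; apply: eq_bigr => a _; rewrite mulNr. Qed.

Lemma costD (x y : arc -> R) al be :
  cost c (fun a => al * x a + be * y a) = al * cost c x + be * cost c y.
Proof. by rewrite /cost !mulr_sumr -big_split; apply: eq_bigr => a _ /=; ring. Qed.

Lemma NxD (x y : arc -> R) al be v :
  Nx tail head (fun a => al * x a + be * y a) v =
  al * Nx tail head x v + be * Nx tail head y v.
Proof. by rewrite /Nx !big_split /= -!mulr_sumr; ring. Qed.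

Lemma restrD (x y : arc -> R) al be :
  restr (fun a => al * x a + be * y a) = (fun a : tol => al * restr x a + be * restr y a).
Proof. by []. Qed.

Lemma tdot_le (t w w' : tol -> R) : nonneg t -> (forall a, w a <= w' a) ->
  tdot t w <= tdot t w'.
Proof. by move=> t_ge0 le_ww'; apply: ler_sum => a _; apply: ler_wpM2l. Qed.

Lemma tdotBB (t t' w w' : tol -> R) :
  \sum_a (t a - t' a) * (w a - w' a) = tdot t w - tdot t w' - (tdot t' w - tdot t' w').
Proof. by rewrite /tdot -!sumrB; apply: eq_bigr => a _; ring. Qed.

Lemma fval_uniq t v1 v2 : fv t v1 -> fv t v2 -> v1 = v2.
Proof.
move=> [x1 X1 [-> opt1]] [x2 X2 [-> opt2]].
by apply/eqP; rewrite eq_le opt1 // opt2.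
Qed.

Lemma Wt_exchange t t' w w' : Wt_ t w -> Wt_ t w' -> Wt_ t' w -> Wt_ t' w' ->
  tdot t w + tdot t' w' = tdot t w' + tdot t' w.
Proof.
move=> [x1 [f1 o1]] [x2 [f2 o2]] [x3 [f3 o3]] [x4 [f4 o4]].
have := o1 _ _ f2; have := o2 _ _ f1; have := o1 _ _ f3; have := o3 _ _ f1.
have := o2 _ _ f4; have := o4 _ _ f2; have := o3 _ _ f4; have := o4 _ _ f3.
lra.
Qed.

Section Face.
Variable F : (tol -> R) * R -> Prop.
Hypothesis F_face : is_face epi F.
Hypothesis F_nonvertical : ~ dir_contains_e F.
Variable T : (tol -> R) -> Prop.
Hypothesis T_proj : forall t, T t <-> exists z, F (t, z).

Lemma half_in01 : 0 < (1 / 2 : R) < 1.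
Proof. by apply/andP; split; lra. Qed.

Lemma pcomb_vertical (t : tol -> R) l z1 z2 :
  pcomb l (t, z1) (t, z2) = (t, l * z1 + (1 - l) * z2).
Proof. by rewrite /pcomb /=; congr (_, _); apply: funext => a /=; ring. Qed.

(* If [F] contained [(t, z)] above the graph, extremality would put the
   vertical segment from [(t, -f t)] to [(t, z + (z + f t))] in [F]. *)
Lemma face_graph t z : F (t, z) -> fv t (- z).
Proof.
move=> Ftz; have [F_epi [_ F_ext]] := F_face.
have [t_ge0 [v [fvv le_z]]] := F_epi _ Ftz.
suff -> : z = - v by rewrite opprK.
move: le_z; rewrite /= le_eqVlt => /orP[/eqP -> //|lt_z].
exfalso; apply: F_nonvertical.
pose e := z + v.
have e_gt0 : 0 < e by rewrite /e; lra.
have epi1 : epi (t, - v) by split => //; exists v.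
have epi2 : epi (t, z + e) by split => //; exists v; split => //=; lra.
have := F_ext _ _ _ epi1 epi2 half_in01.
rewrite pcomb_vertical (_ : 1 / 2 * - v + (1 - 1 / 2) * (z + e) = z); last first.
  by rewrite /e; field.
move=> /(_ Ftz) [F1 F2].
exists 1%N, (fun _ => (2 * e)^-1), (fun _ => (t, z + e)), (fun _ => (t, - v)).
split=> //; split=> [a|]; rewrite big_ord1 /=; first by rewrite subrr mulr0.
by rewrite (_ : z + e - - v = 2 * e) ?mulVf ?gt_eqF ?mulr_gt0 // /e; ring.
Qed.

Lemma face_fval t : T t -> exists v, fv t v /\ F (t, - v).
Proof.
by move=> /T_proj [z Fz]; exists (- z); rewrite opprK; split => //; apply: face_graph.
Qed.

Lemma action_nonneg t : T t -> nonneg t.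
Proof. by move=> /T_proj [z /F_face.1 []]. Qed.

Lemma action_convex t1 t2 l : T t1 -> T t2 -> 0 <= l <= 1 ->
  T (fun a => l * t1 a + (1 - l) * t2 a).
Proof.
move=> /T_proj [z1 F1] /T_proj [z2 F2] l01; apply/T_proj.
by exists (l * z1 + (1 - l) * z2); apply: F_face.2.1 F1 F2 l01.
Qed.

Lemma fval_face_affine t1 t2 v1 v2 l : F (t1, - v1) -> F (t2, - v2) -> 0 <= l <= 1 ->
  fv (fun a => l * t1 a + (1 - l) * t2 a) (l * v1 + (1 - l) * v2).
Proof.
move=> F1 F2 l01; have := face_graph (F_face.2.1 _ _ _ F1 F2 l01).
by rewrite /pcomb /=; congr fv; ring.
Qed.

Section RelativeInterior.
Variables (t0 : tol -> R) (x0 : arc -> R).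
Hypothesis T_t0 : T t0.
Hypothesis t0_relint : forall t, T t -> exists s l, T s /\ 0 < l < 1 /\
  forall a, t0 a = l * t a + (1 - l) * s a.
Hypothesis X_x0 : X x0.
Hypothesis x0_opt : forall y, X y ->
  cost c x0 + tdot t0 (restr x0) <= cost c y + tdot t0 (restr y).

Local Notation v0 := (cost c x0 + tdot t0 (restr x0)).

Lemma fval_t0 : fv t0 v0.
Proof. by exists x0. Qed.

Lemma face_t0 : F (t0, - v0).
Proof.
have [v [fvv Fv]] := face_fval T_t0.
by rewrite (fval_uniq fval_t0 fvv).
Qed.

(* [f] is affine on [T] and [t0] is a strict convex combination of any [t] in
   [T] with another point of [T]: an optimum at [t0] is tight at [t]. *)
Lemma opt_t0_opt_T x : X x -> cost c x + tdot t0 (restr x) = v0 ->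
  forall t, T t -> forall w' x', feas w' x' ->
  cost c x + tdot t (restr x) <= cost c x' + tdot t w'.
Proof.
move=> Xx x_opt t Tt w' x' [X' [w'_ge0 le_x'w']].
have [s [l [Ts [/andP [l_gt0 l_lt1] t0E]]]] := t0_relint Tt.
have [vt [[_ _ [_ opt_t]] Ft]] := face_fval Tt.
have [vs [[_ _ [_ opt_s]] Fs]] := face_fval Ts.
have l01 : 0 <= l <= 1 by rewrite !ltW.
have := fval_face_affine Ft Fs l01.
rewrite (_ : (fun a => _) = t0); last by apply: funext => a; rewrite t0E.
move=> /(fval_uniq fval_t0) v0E.
have t0x : tdot t0 (restr x) = l * tdot t (restr x) + (1 - l) * tdot s (restr x).
  by rewrite -tdotDl; congr tdot; apply: funext => a; exact: t0E.
have tight : cost c x + tdot t (restr x) = vt.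
  have ht := opt_t _ Xx; have hs := opt_s _ Xx.
  have : l * (cost c x + tdot t (restr x) - vt) = 0.
    have : 0 <= (1 - l) * (cost c x + tdot s (restr x) - vs) by apply: mulr_ge0; lra.
    have : 0 <= l * (cost c x + tdot t (restr x) - vt) by apply: mulr_ge0; lra.
    by move: x_opt; rewrite t0x v0E; lra.
  by move/eqP; rewrite mulf_eq0 gt_eqF //= subr_eq0 => /eqP.
rewrite tight; apply: le_trans (opt_t _ X') _; rewrite lerD2l.
by apply: tdot_le => //; apply: action_nonneg.
Qed.

Lemma WT_restr_opt x : X x -> cost c x + tdot t0 (restr x) = v0 -> WT_ T (restr x).
Proof.
move=> Xx x_opt t Tt; exists x; split; last exact: opt_t0_opt_T.
by split=> //; split=> // a; apply: Xx.2.
Qed.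

Lemma WT_x0 : WT_ T (restr x0).
Proof. exact: WT_restr_opt. Qed.

Lemma relint_zero a : t0 a = 0 -> forall t, T t -> t a = 0.
Proof.
move=> t0a t Tt; have [s [l [Ts [/andP [l_gt0 l_lt1] t0E]]]] := t0_relint Tt.
have := t0E a; rewrite t0a => t0a_comb.
have : 0 <= (1 - l) * s a by apply: mulr_ge0 (action_nonneg Ts a); lra.
have : 0 <= l * t a by apply: mulr_ge0 (action_nonneg Tt a); exact: ltW.
move=> lt_ge0 ls_ge0; have : l * t a = 0 by lra.
by move/eqP; rewrite mulf_eq0 gt_eqF //= => /eqP.
Qed.

(* Homogenisation of [X]: a point [x] of [X] is the ray [(x, 1)] of the cone
   [flow_ray], and a ray [y] of that cone is brought back to [X] by
   [dehomog], which averages it with [x0]. *)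
Definition arcpart (y : option arc -> R) : arc -> R := fun a => y (Some a).

Definition flow_ray (y : option arc -> R) :=
  forall v, Nx tail head (arcpart y) v = y None * bvec R o d v.

Definition dehomog (y : option arc -> R) : arc -> R :=
  fun a => (y None + 1)^-1 * arcpart y a + (y None + 1)^-1 * x0 a.

Definition hgap (y : option arc -> R) :=
  cost c (arcpart y) + tdot t0 (restr (arcpart y)) - y None * v0.

Lemma arcpart_sub (y z : option arc -> R) th :
  arcpart (fun i => y i - th * z i) = fun a => 1 * arcpart y a + (- th) * arcpart z a.
Proof. by apply: funext => a; rewrite /arcpart mul1r mulNr. Qed.

Lemma flow_ray_sub y z th : flow_ray y -> flow_ray z -> flow_ray (fun i => y i - th * z i).
Proof. by move=> fy fz v; rewrite arcpart_sub NxD fy fz; ring. Qed.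

Lemma hgap_sub y z th : hgap (fun i => y i - th * z i) = hgap y - th * hgap z.
Proof. by rewrite /hgap arcpart_sub costD restrD tdotDr; ring. Qed.

Lemma cone_shift_gt0 y : in_cone flow_ray y -> 0 < y None + 1.
Proof. by move=> [_ y_ge0]; rewrite ltr_pwDr. Qed.

Lemma dehomog_X y : in_cone flow_ray y -> X (dehomog y).
Proof.
move=> cy; have yp := cone_shift_gt0 cy; split=> [v|a].
  by rewrite NxD cy.1 X_x0.1; field; rewrite gt_eqF.
by rewrite addr_ge0 // mulr_ge0 ?invr_ge0 ?(ltW yp) ?cy.2 ?X_x0.2.
Qed.

Lemma dehomog_value y : in_cone flow_ray y ->
  cost c (dehomog y) + tdot t0 (restr (dehomog y)) = v0 + hgap y / (y None + 1).
Proof.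
move=> cy; rewrite costD restrD tdotDr /hgap.
by field; rewrite gt_eqF // cone_shift_gt0.
Qed.

Lemma hgap_ge0 y : in_cone flow_ray y -> 0 <= hgap y.
Proof.
move=> cy; have := x0_opt (dehomog_X cy); rewrite dehomog_value // lerDl.
by rewrite pmulr_lge0 // invr_gt0 cone_shift_gt0.
Qed.

Section Perpendicular.
Variable u : tol -> R.
Hypothesis u_perp : forall w w', WT_ T w -> WT_ T w' -> tdot u w = tdot u w'.

Lemma tdot_indicator (t w : tol -> R) a :
  tdot t (fun b => w b + (b == a)%:R) = tdot t w + t a.
Proof.
rewrite /tdot (eq_bigr (fun b => t b * w b + t b * (b == a)%:R)) => [|b _]; last first.
  by rewrite mulrDr.
rewrite big_split /=; congr (_ + _).
by rewrite (bigD1 a) //= eqxx mulr1 big1 ?addr0 // => b /negbTE ->; rewrite mulr0.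
Qed.

Lemma perp_zero a : t0 a = 0 -> u a = 0.
Proof.
move=> t0a; have W1 : WT_ T (fun b => restr x0 b + (b == a)%:R).
  move=> t Tt; exists x0; split.
    split=> //; split=> b; last by rewrite /restr lerDl ler0n.
    by apply: addr_ge0 => //; apply: X_x0.2.
  move=> w' x' feas'; rewrite tdot_indicator (relint_zero t0a Tt) addr0.
  exact: opt_t0_opt_T.
by have := u_perp W1 WT_x0; rewrite tdot_indicator; lra.
Qed.

Definition hshift (y : option arc -> R) :=
  tdot u (restr (arcpart y)) - y None * tdot u (restr x0).

Lemma hshift_sub y z th : hshift (fun i => y i - th * z i) = hshift y - th * hshift z.
Proof. by rewrite /hshift arcpart_sub restrD tdotDr; ring. Qed.

Lemma hgap0_hshift0 y : in_cone flow_ray y -> hgap y = 0 -> hshift y = 0.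
Proof.
move=> cy gap0; have yp := cone_shift_gt0 cy.
have := dehomog_value cy; rewrite gap0 mul0r addr0 => opt.
have := u_perp (WT_restr_opt (dehomog_X cy) opt) WT_x0.
rewrite restrD tdotDr /hshift => h.
have := congr1 (fun r => (y None + 1) * r) h; rewrite mulrDr !mulrA mulfV ?gt_eqF //.
rewrite !mul1r; lra.
Qed.

Lemma hoffman_bound : exists2 K, 0 <= K & forall x, X x ->
  0 <= (tdot u (restr x) - tdot u (restr x0)) + K * (cost c x + tdot t0 (restr x) - v0).
Proof.
have [K K_ge0 HK] := cone_bound flow_ray_sub hgap_sub hshift_sub hgap_ge0 hgap0_hshift0.
exists K => // x Xx.
pose y i := if i is Some a then x a else 1.
have cy : in_cone flow_ray y.
  by split=> [v|[a|]] /=; rewrite ?mul1r ?ler01 //; [apply: Xx.1 | apply: Xx.2].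
by have := HK y cy; rewrite /hshift /hgap /= !mul1r.
Qed.

Lemma epi_shift K dl : 0 <= K -> (forall x, X x ->
    0 <= (tdot u (restr x) - tdot u (restr x0)) + K * (cost c x + tdot t0 (restr x) - v0)) ->
  0 < dl -> dl * K <= 1 -> (forall a, dl * `|u a| <= t0 a) ->
  epi (fun a => t0 a + dl * u a, - (v0 + dl * tdot u (restr x0))).
Proof.
move=> K_ge0 HK dl_gt0 dlK dlu; split=> [a /=|].
  have := dlu a; have := ler_wpM2l (ltW dl_gt0) (ler_norm (- u a)).
  by rewrite normrN mulrN; lra.
have tdotE w : tdot (fun a => t0 a + dl * u a) w = tdot t0 w + dl * tdot u w.
  by rewrite -[tdot t0 w]mul1r -tdotDl; congr tdot; apply: funext => a; rewrite mul1r.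
exists (v0 + dl * tdot u (restr x0)); split=> //.
exists x0 => //; split=> [|y Xy]; first by rewrite tdotE addrA.
rewrite tdotE -subr_ge0.
have := mulr_ge0 (ltW dl_gt0) (HK _ Xy).
have : 0 <= (cost c y + tdot t0 (restr y) - v0) * (1 - dl * K).
  by apply: mulr_ge0; [rewrite subr_ge0; apply: x0_opt | lra].
lra.
Qed.

End Perpendicular.

(* With [dl] small, [(t0 +- dl u, -(v0 +- dl tdot u x0))] lie in the
   epigraph by the Hoffman bound; their midpoint [(t0, -v0)] is in [F]. *)
Lemma perp_shift_in_T u : (forall w w', WT_ T w -> WT_ T w' -> tdot u w = tdot u w') ->
  exists2 dl, 0 < dl & T (fun a => t0 a + dl * u a) /\ T (fun a => t0 a + dl * - u a).
Proof.
move=> u_perp.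
have Nu_perp w w' : WT_ T w -> WT_ T w' -> tdot (fun a => - u a) w = tdot (fun a => - u a) w'.
  by move=> W1 W2; rewrite !tdotNl (u_perp _ _ W1 W2).
have [K1 K1_ge0 HK1] := hoffman_bound u_perp.
have [K2 K2_ge0 HK2] := hoffman_bound Nu_perp.
have t0_ge0 := action_nonneg T_t0.
pose M := \sum_a `|u a| / t0 a.
have M_ge0 : 0 <= M by apply: sumr_ge0 => a _; apply: divr_ge0.
pose D := 1 + K1 + K2 + M.
have D_gt0 : 0 < D by rewrite /D; lra.
pose dl := D^-1.
have dl_gt0 : 0 < dl by rewrite invr_gt0.
have dlK K : K <= D -> dl * K <= 1 by move=> KD; rewrite mulrC ler_pdivrMr // mul1r.
have dlu a : dl * `|u a| <= t0 a.
  have [t0a|t0a] := eqVneq (t0 a) 0; first by rewrite (perp_zero u_perp t0a) normr0 mulr0 t0a.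
  have t0a_gt0 : 0 < t0 a by rewrite lt_def t0a t0_ge0.
  have : `|u a| / t0 a <= M.
    rewrite /M (bigD1 a) //= lerDl.
    by apply: sumr_ge0 => b _; apply: divr_ge0.
  rewrite ler_pdivrMr // => uM.
  by rewrite mulrC ler_pdivrMr // mulrC (le_trans uM) // ler_pM2r // /D; lra.
have K1D : K1 <= D by rewrite /D; lra.
have K2D : K2 <= D by rewrite /D; lra.
have dlNu a : dl * `|- u a| <= t0 a by rewrite normrN.
have epi1 := epi_shift K1_ge0 HK1 dl_gt0 (dlK K1 K1D) dlu.
have epi2 := epi_shift K2_ge0 HK2 dl_gt0 (dlK K2 K2D) dlNu.
have := F_face.2.2 _ _ _ epi1 epi2 half_in01.
rewrite /pcomb /= (_ : (fun a => _) = t0); last by apply: funext => a; field.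
rewrite tdotNl (_ : _ + _ = - v0); last by field.
move=> /(_ face_t0) [F1 F2].
by exists dl => //; split; apply/T_proj; eexists; [exact: F1 | exact: F2].
Qed.

Lemma affdim_action_W : affdim T + affdim (WT_ T) = #|{: tol}|%:Z.
Proof.
have [mT [pT [qT [mpT ->]]]] := affdim_maxrank T_t0.
have [mW [pW [qW [mpW ->]]]] := affdim_maxrank WT_x0.
rewrite -PoszD; congr Posz; apply: rank_orth_complement.
  apply/matrixP => i k; rewrite diffmx_mul_tr tdotBB mxE.
  have [T1 T2] := mpT.1 i; have [W1 W2] := mpW.1 k.
  by have := Wt_exchange (W1 _ T1) (W2 _ T1) (W1 _ T2) (W2 _ T2); lra.
apply/row_subP => i; set K := kermx _.
have u_perp w w' : WT_ T w -> WT_ T w' -> tdot (rowfun (row i K)) w = tdot (rowfun (row i K)) w'.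
  move=> W1 W2; have := kermx_diffmx_orth (row_sub i K) (maxrank_pairs_sub mpW W1 W2).
  by rewrite /tdot (eq_bigr _ (fun a _ => mulrBr _ _ _)) sumrB => /eqP; rewrite subr_eq0 => /eqP.
have [dl dl_gt0 [T1 T2]] := perp_shift_in_T u_perp.
have := maxrank_pairs_sub mpT T1 T2.
rewrite (_ : rowv _ = (2 * dl) *: row i K); last first.
  by apply/rowP => j; rewrite -[in RHS](rowfunK (row i K)) !mxE; ring.
by move/(scalemx_sub (2 * dl)^-1); rewrite scalerA mulVf ?scale1r // mulf_neq0 // gt_eqF.
Qed.

End RelativeInterior.

Lemma affdim_face_action : (exists p, F p) ->
  affdim T + affdim (WT_ T) = #|{: tol}|%:Z.
Proof.
move=> [[t z] Ftz]; have Tt : T t by apply/T_proj; exists z.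
have [t0 T_t0 t0_relint] := exists_relint action_convex Tt.
have [v [[x0 X_x0 [-> x0_opt]] _]] := face_fval T_t0.
exact: affdim_action_W T_t0 t0_relint X_x0 x0_opt.
Qed.

End Face.
End Network.

Theorem theorem2 (R : realType) (V arc : finType) (tail head : arc -> V)
    (c : arc -> R) (A1 : {set arc}) (o d : V)
    (Hsimple : injective (fun a => (tail a, head a)))
    (Hc : forall a, 0 <= c a)
    (HA1 : A1 != set0) (HA1p : A1 != setT)
    (Hod : o != d)
    (Hpath : exists s, tollfree_walk tail head A1 o d s)
    (T : (tolled A1 -> R) -> Prop)
    (HT : action_set tail head c o d T) :
  affdim T + affdim (WT tail head c o d T) = #|A1|%:Z.
Proof.
have [F [F_face [F_ne [F_nonvertical T_proj]]]] := HT.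
rewrite (_ : #|A1| = #|{: tolled A1}|); last by rewrite card_sig; apply: eq_card.
exact: (affdim_face_action F_face F_nonvertical T_proj F_ne).
Qed.
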